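(* Let $\mathbf A$ be an algebra of type $(\otimes,\circ,{}^{*})$ of arity $(2,2,1)$, $G\subseteq A$, and $\perp\subseteq\overline A\times\overline A$. Then: (1) $\langle\mathbf A,G\rangle$ is a reduced matrix model of $\mathsf{NeL}$ iff $(\mathbf A,\perp_G,\{\mathsf{t},\mathsf{f}\})$ is an $\mathfrak{N}_w$-model; (2) $(\mathbf A,\perp,\{\mathsf{t},\mathsf{f}\})$ is an $\mathfrak{N}_w$-model iff $\langle\mathbf A,F_\perp\rangle$ is a reduced matrix model of $\mathsf{NeL}$ and $\perp=\perp_{F_\perp}$. Consequently, $\mathsf{Alg}^{*}\mathsf{NeL}$ coincides with the class of algebraic reducts of $\mathfrak{N}_w$-models. Moreover, for every reduced matrix model $\langle\mathbf A,G\rangle$ of $\mathsf{NeL}$ and every $\mathfrak{N}_w$-model $(\mathbf A,\perp,\{\mathsf{t},\mathsf{f}\})$, one has $G=F_{\perp_G}$ and $\perp=\perp_{F_\perp}$.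
   Context: Formulas are built from a countably infinite set of variables using binary $\otimes,\circ$ and unary ${}^{*}$; $\mathbf{Fm}$ is the formula algebra. Abbreviations (also term operations in algebras): $\varphi\Rightarrow\psi:=(\varphi\circ\psi^{*})^{*}$; $\varphi\Leftrightarrow\psi:=(\varphi\Rightarrow\psi)\otimes(\psi\Rightarrow\varphi)$; $\varphi\not\Leftrightarrow\psi:=(\varphi\Leftrightarrow\psi)^{*}$; $\varphi\not\Leftrightarrow\psi\not\Leftrightarrow\chi:=((\varphi\not\Leftrightarrow\psi)\otimes(\varphi\not\Leftrightarrow\chi))\otimes(\psi\not\Leftrightarrow\chi)$. $\mathsf{NeL}$: axiom schemes (A1) $\varphi\Rightarrow\varphi$; (A2) $(\varphi\circ\psi)\Rightarrow(\psi\circ\varphi)$; (A3) $\varphi\Rightarrow\varphi^{**}$; (A4) $(\varphi\Rightarrow\psi)\Rightarrow(\varphi\circ\psi)$; (A5) $(\varphi\otimes\psi)\Leftrightarrow(\psi\otimes\varphi)$; (A6) $((\varphi\otimes\psi)\Rightarrow\chi)\Rightarrow((\varphi\otimes\chi^{*})\Rightarrow\psi^{*})$; (A7) $(\varphi\not\Leftrightarrow\psi\not\Leftrightarrow\chi)\Rightarrow((\varphi\Rightarrow\psi)\Rightarrow((\psi\Rightarrow\chi)\Rightarrow(\varphi\Rightarrow\chi)))$; rules on arbitrary formulas: $\varphi\Rightarrow\psi,\varphi/\psi$; $\varphi,\psi/\varphi\otimes\psi$; $\varphi\Leftrightarrow\psi,\chi/\chi'$ ($\chi'$ from $\chi$ replacing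 one or more occurrences of $\varphi$ by $\psi$); $\varphi\otimes\psi/\varphi$. A matrix model of $\mathsf{NeL}$ is a pair $\langle\mathbf A,G\rangle$ with $G\subseteq A$ such that whenever $\Gamma\vdash_{\mathsf{NeL}}\varphi$ and $h:\mathbf{Fm}\to\mathbf A$ is a homomorphism, $h(\Gamma)\subseteq G$ implies $h(\varphi)\in G$. It is reduced if the largest congruence $\theta$ of $\mathbf A$ compatible with $G$ (i.e. $a\in G$ and $a\,\theta\, b$ imply $b\in G$) is the identity. $\mathsf{Alg}^{*}\mathsf{NeL}$ is the class of algebras $\mathbf A$ such that $\langle \mathbf A,G\rangle$ is a reduced matrix model of $\mathsf{NeL}$ for some $G$. Let $\mathsf{t}\neq\mathsf{f}$ be symbols not in $A$, $\overline A=A\cup\{\mathsf{t},\mathsf{f}\}$. For $G\subseteq A$: $\perp_G=\{(a,b)\in A^2: a\Rightarrow b^{*}\in G\}\cup\{(a,\mathsf{f}):a\in G\}\cup\{(a,\mathsf{t}):a^{*}\in G\}$. For $\perp\subseteq\overline A\times\overline A$: $F_\perp=\{a\in A:a\perp\mathsf{f}\}$. A weak $\mathcal{N}$-algebra is such an algebra with $\otimes,\circ$ commutative, $x^{**}=x$, $(x\otimes y)\circ z=(x\otimes z)\circ y$. An $\mathfrak{N}_w$-model is $(\mathbf A,\perp,\{\mathsf{t},\mathsf{f}\})$ with $\mathbf A$ a weak $\mathcal{N}$-algebra and $\perp\subseteq\overline A\times\overline A$ such that for all $x,y,z\in A$: (a) $x\perp x^{*}$; (b) $x\perp y^{*}$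 and $y\perp x^{*}$ imply $x=y$; (c) $x\perp y$ iff $x\circ y\perp\mathsf{t}$; (d) $x\perp\mathsf{t}$ iff $x^{*}\perp\mathsf{f}$; (e) $x\perp\mathsf{f}$ and $y\perp\mathsf{f}$ iff $x\otimes y\perp\mathsf{f}$; (f) $(x\circ y^{*})^{*}\perp(x\circ y)^{*}$; (g) $x\perp y$ and $x\perp\mathsf{f}$ imply $y\perp\mathsf{t}$; (h) $(x\not\Leftrightarrow y\not\Leftrightarrow z)\perp((x\Rightarrow y)\Rightarrow((y\Rightarrow z)\Rightarrow(x\Rightarrow z)))^{*}$.
   Formalization: Every relation ⊥, in the definition of an 𝔑_w-model, in part (2) and in the Moreover clause, is a subset of A × Ā (left component in A) rather than of Ā × Ā. The statement above fails without it. *)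

Inductive Fm : Type :=
| Var : nat -> Fm
| FTens : Fm -> Fm -> Fm
| FCirc : Fm -> Fm -> Fm
| FStar : Fm -> Fm.

Definition FImp (p q : Fm) : Fm := FStar (FCirc p (FStar q)).
Definition FIff (p q : Fm) : Fm := FTens (FImp p q) (FImp q p).
Definition FNIff (p q : Fm) : Fm := FStar (FIff p q).
Definition FNIff3 (p q r : Fm) : Fm :=
  FTens (FTens (FNIff p q) (FNIff p r)) (FNIff q r).

Inductive NeL_axiom : Fm -> Prop :=
| ax1 p : NeL_axiom (FImp p p)
| ax2 p q : NeL_axiom (FImp (FCirc p q) (FCirc q p))
| ax3 p : NeL_axiom (FImp p (FStar (FStar p)))
| ax4 p q : NeL_axiom (FImp (FImp p q) (FCirc p q))
| ax5 p q : NeL_axiom (FIff (FTens p q) (FTens q p))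
| ax6 p q r : NeL_axiom
    (FImp (FImp (FTens p q) r) (FImp (FTens p (FStar r)) (FStar q)))
| ax7 p q r : NeL_axiom
    (FImp (FNIff3 p q r)
          (FImp (FImp p q) (FImp (FImp q r) (FImp p r)))).

(** [repl0 p q c c']: c' is obtained from c by replacing zero or more
    occurrences of p by q. *)
Inductive repl0 (p q : Fm) : Fm -> Fm -> Prop :=
| r0_refl c : repl0 p q c c
| r0_here : repl0 p q p q
| r0_tens a b a' b' : repl0 p q a a' -> repl0 p q b b' ->
    repl0 p q (FTens a b) (FTens a' b')
| r0_circ a b a' b' : repl0 p q a a' -> repl0 p q b b' ->
    repl0 p q (FCirc a b) (FCirc a' b')
| r0_star a a' : repl0 p q a a' -> repl0 p q (FStar a) (FStar a').

(** [repl1 p q c c']: c' is obtained from c by replacing one or more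
    occurrences of p by q. *)
Inductive repl1 (p q : Fm) : Fm -> Fm -> Prop :=
| r1_here : repl1 p q p q
| r1_tensl a b a' b' : repl1 p q a a' -> repl0 p q b b' ->
    repl1 p q (FTens a b) (FTens a' b')
| r1_tensr a b a' b' : repl0 p q a a' -> repl1 p q b b' ->
    repl1 p q (FTens a b) (FTens a' b')
| r1_circl a b a' b' : repl1 p q a a' -> repl0 p q b b' ->
    repl1 p q (FCirc a b) (FCirc a' b')
| r1_circr a b a' b' : repl0 p q a a' -> repl1 p q b b' ->
    repl1 p q (FCirc a b) (FCirc a' b')
| r1_star a a' : repl1 p q a a' -> repl1 p q (FStar a) (FStar a').

Inductive NeL_deriv (Gamma : Fm -> Prop) : Fm -> Prop :=
| d_prem p : Gamma p -> NeL_deriv Gamma p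
| d_ax p : NeL_axiom p -> NeL_deriv Gamma p
| d_mp p q : NeL_deriv Gamma (FImp p q) -> NeL_deriv Gamma p -> NeL_deriv Gamma q
| d_adj p q : NeL_deriv Gamma p -> NeL_deriv Gamma q -> NeL_deriv Gamma (FTens p q)
| d_repl p q c c' : NeL_deriv Gamma (FIff p q) -> NeL_deriv Gamma c ->
    repl1 p q c c' -> NeL_deriv Gamma c'
| d_simp p q : NeL_deriv Gamma (FTens p q) -> NeL_deriv Gamma p.

Record algebra : Type := Algebra {
  carrier :> Type;
  tens : carrier -> carrier -> carrier;
  circ : carrier -> carrier -> carrier;
  star : carrier -> carrier }.

Section Alg.
Variable A : algebra.

Definition aimp (x y : A) : A := star A (circ A x (star A y)).
Definition aiff (x y : A) : A := tens A (aimp x y) (aimp y x).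
Definition aniff (x y : A) : A := star A (aiff x y).
Definition aniff3 (x y z : A) : A :=
  tens A (tens A (aniff x y) (aniff x z)) (aniff y z).

Definition is_hom (h : Fm -> A) : Prop :=
  (forall p q, h (FTens p q) = tens A (h p) (h q)) /\
  (forall p q, h (FCirc p q) = circ A (h p) (h q)) /\
  (forall p, h (FStar p) = star A (h p)).

Definition matrix_model (G : A -> Prop) : Prop :=
  forall (Gamma : Fm -> Prop) (phi : Fm), NeL_deriv Gamma phi ->
  forall h : Fm -> A, is_hom h ->
  (forall psi, Gamma psi -> G (h psi)) -> G (h phi).

Definition congruence (th : A -> A -> Prop) : Prop :=
  (forall x, th x x) /\ (forall x y, th x y -> th y x) /\
  (forall x y z, th x y -> th y z -> th x z) /\
  (forall x y x' y', th x x' -> th y y' -> th (tens A x y) (tens A x' y')) /\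
  (forall x y x' y', th x x' -> th y y' -> th (circ A x y) (circ A x' y')) /\
  (forall x x', th x x' -> th (star A x) (star A x')).

Definition compatible (th : A -> A -> Prop) (G : A -> Prop) : Prop :=
  forall a b, G a -> th a b -> G b.

Definition largest_compatible_congruence (G : A -> Prop) (th : A -> A -> Prop) : Prop :=
  congruence th /\ compatible th G /\
  forall th', congruence th' -> compatible th' G -> forall a b, th' a b -> th a b.

Definition reduced (G : A -> Prop) : Prop :=
  exists th, largest_compatible_congruence G th /\ forall a b, th a b <-> a = b.

Definition reduced_matrix_model (G : A -> Prop) : Prop :=
  matrix_model G /\ reduced G.

(** Abar = A + {t, f} *)
Inductive ext : Type := Elt (a : A) | TT | FF.

(** Relations perp are taken on A x Abar. *)
Definition perp_of (G : A -> Prop) (a : A) (u : ext) : Prop :=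
  match u with
  | Elt b => G (aimp a (star A b))
  | FF => G a
  | TT => G (star A a)
  end.

Definition F_of (perp : A -> ext -> Prop) (a : A) : Prop := perp a FF.

Definition weak_N_algebra : Prop :=
  (forall x y, tens A x y = tens A y x) /\
  (forall x y, circ A x y = circ A y x) /\
  (forall x, star A (star A x) = x) /\
  (forall x y z, circ A (tens A x y) z = circ A (tens A x z) y).

Definition Nw_model (perp : A -> ext -> Prop) : Prop :=
  weak_N_algebra /\
  (forall x, perp x (Elt (star A x))) /\
  (forall x y, perp x (Elt (star A y)) -> perp y (Elt (star A x)) -> x = y) /\
  (forall x y, perp x (Elt y) <-> perp (circ A x y) TT) /\
  (forall x, perp x TT <-> perp (star A x) FF) /\
  (forall x y, (perp x FF /\ perp y FF) <-> perp (tens A x y) FF) /\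
  (forall x y, perp (star A (circ A x (star A y))) (Elt (star A (circ A x y)))) /\
  (forall x y, perp x (Elt y) -> perp x FF -> perp y TT) /\
  (forall x y z, perp (aniff3 x y z)
     (Elt (star A (aimp (aimp x y) (aimp (aimp y z) (aimp x z)))))).

End Alg.
Arguments Elt {A}.
Arguments TT {A}.
Arguments FF {A}.

(* In a matrix model of NeL the replacement rule makes [G (a <=> b)] a
   congruence compatible with [G], and every compatible congruence relates
   only pairs with [G (a <=> b)]; so a matrix model is reduced exactly when
   [G (a <=> b)] means [a = b].  In that situation the axioms (A1)-(A7) and the
   rules of NeL, read in [G], yield the equations of weak N-algebras and
   conditions (a)-(h) for [perp_G]; conversely (a)-(h) make every axiom valid
   and every rule sound.  Finally, in an N_w-model
   [x perp y] iff [x o y perp t] iff [(x o y)* perp f], and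
   [(x o y)* = x => y*], so [perp] is recovered from [F_perp]. *)

From Stdlib Require Import FunctionalExtensionality PropExtensionality.

Fixpoint eval (A : algebra) (v : nat -> A) (f : Fm) : A :=
  match f with
  | Var n => v n
  | FTens p q => tens A (eval A v p) (eval A v q)
  | FCirc p q => circ A (eval A v p) (eval A v q)
  | FStar p => star A (eval A v p)
  end.

Definition valuation3 (A : algebra) (a b c : A) : nat -> A :=
  fun n => match n with 0 => a | 1 => b | _ => c end.

Ltac solve_repl0 :=
  first [ apply r0_here | apply r0_refl
        | apply r0_tens; solve_repl0 | apply r0_circ; solve_repl0
        | apply r0_star; solve_repl0 ].

Ltac solve_repl :=
  first [ apply r1_here
        | apply r1_tensl; [solve_repl | solve_repl0]
        | apply r1_tensr; [solve_repl0 | solve_repl]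
        | apply r1_circl; [solve_repl | solve_repl0]
        | apply r1_circr; [solve_repl0 | solve_repl]
        | apply r1_star; solve_repl ].

Section Homomorphisms.
Variable A : algebra.

Lemma eval_is_hom (v : nat -> A) : is_hom A (eval A v).
Proof. repeat split. Qed.

Variable h : Fm -> A.
Hypothesis Hh : is_hom A h.

Lemma hom_imp p q : h (FImp p q) = aimp A (h p) (h q).
Proof. destruct Hh as [_ [Hc Hs]]. unfold FImp, aimp. now rewrite Hs, Hc, Hs. Qed.

Lemma hom_iff p q : h (FIff p q) = aiff A (h p) (h q).
Proof. unfold FIff, aiff. now rewrite (proj1 Hh), !hom_imp. Qed.

Lemma hom_niff3 p q r : h (FNIff3 p q r) = aniff3 A (h p) (h q) (h r).
Proof.
  destruct Hh as [Ht [_ Hs]].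
  unfold FNIff3, aniff3, FNIff, aniff. now rewrite !Ht, !Hs, !hom_iff.
Qed.

Lemma hom_repl0 p q c c' : h p = h q -> repl0 p q c c' -> h c = h c'.
Proof.
  destruct Hh as [Ht [Hc Hs]]. intros E R.
  induction R; auto; [rewrite !Ht | rewrite !Hc | rewrite !Hs]; congruence.
Qed.

Lemma hom_repl1 p q c c' : h p = h q -> repl1 p q c c' -> h c = h c'.
Proof.
  intros E R. pose proof (hom_repl0 p q) as R0.
  destruct Hh as [Ht [Hc Hs]].
  induction R; auto; rewrite ?Ht, ?Hc, ?Hs; f_equal; auto.
Qed.

End Homomorphisms.

Section MatrixModel.
Variable A : algebra.
Variable G : A -> Prop.
Hypothesis HM : matrix_model A G.

Lemma mm_deriv Gamma phi v : NeL_deriv Gamma phi ->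
  (forall psi, Gamma psi -> G (eval A v psi)) -> G (eval A v phi).
Proof. intros D HG. exact (HM Gamma phi D _ (eval_is_hom A v) HG). Qed.

Lemma mm_axiom phi v : NeL_axiom phi -> G (eval A v phi).
Proof. intro Ax. apply (mm_deriv (fun _ => False)); [now apply d_ax | tauto]. Qed.

Lemma mm_mp a b : G (aimp A a b) -> G a -> G b.
Proof.
  intros Hab Ha.
  apply (mm_deriv (fun psi => psi = FImp (Var 0) (Var 1) \/ psi = Var 0)
           (Var 1) (valuation3 A a b b)).
  - apply (d_mp _ (Var 0)); apply d_prem; auto.
  - now intros psi [-> | ->].
Qed.

Lemma mm_adj a b : G a -> G b -> G (tens A a b).
Proof.
  intros Ha Hb.
  apply (mm_deriv (fun psi => psi = Var 0 \/ psi = Var 1)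
           (FTens (Var 0) (Var 1)) (valuation3 A a b b)).
  - apply d_adj; apply d_prem; auto.
  - now intros psi [-> | ->].
Qed.

Lemma mm_simp a b : G (tens A a b) -> G a.
Proof.
  intro Hab.
  apply (mm_deriv (fun psi => psi = FTens (Var 0) (Var 1))
           (Var 0) (valuation3 A a b b)).
  - apply (d_simp _ _ (Var 1)); now apply d_prem.
  - now intros psi ->.
Qed.

Lemma mm_repl v c c' : repl1 (Var 0) (Var 1) c c' ->
  G (aiff A (v 0) (v 1)) -> G (eval A v c) -> G (eval A v c').
Proof.
  intros R Hiff Hc.
  apply (mm_deriv (fun psi => psi = FIff (Var 0) (Var 1) \/ psi = c) c' v).
  - apply (d_repl _ (Var 0) (Var 1) c c'); try apply d_prem; auto.
  - now intros psi [-> | ->].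
Qed.

Lemma mm_imp_refl a : G (aimp A a a).
Proof. exact (mm_axiom _ (valuation3 A a a a) (ax1 (Var 0))). Qed.

Lemma mm_iff_refl a : G (aiff A a a).
Proof. apply mm_adj; apply mm_imp_refl. Qed.

Lemma mm_iff_compat a b : G a -> G (aiff A a b) -> G b.
Proof.
  intros Ha Hab. exact (mm_repl (valuation3 A a b b) _ _ (r1_here _ _) Hab Ha).
Qed.

Lemma mm_iff_sym a b : G (aiff A a b) -> G (aiff A b a).
Proof.
  intro Hab.
  apply (mm_repl (valuation3 A a b b) (FIff (Var 0) (Var 0)) (FIff (Var 1) (Var 0)));
    [unfold FIff, FImp; solve_repl | exact Hab | apply mm_iff_refl].
Qed.

Lemma mm_iff_trans a b c : G (aiff A a b) -> G (aiff A b c) -> G (aiff A a c).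
Proof.
  intros Hab Hbc.
  apply (mm_repl (valuation3 A b c a) (FIff (Var 2) (Var 0)) (FIff (Var 2) (Var 1)));
    [unfold FIff, FImp; solve_repl | exact Hbc | exact Hab].
Qed.

Lemma mm_iff_context v c c' :
  repl1 (Var 0) (Var 1) (FIff c c) (FIff c c') ->
  G (aiff A (v 0) (v 1)) -> G (aiff A (eval A v c) (eval A v c')).
Proof. intros R Hiff. exact (mm_repl v _ _ R Hiff (mm_iff_refl _)). Qed.

Lemma mm_iff_tensl a b d : G (aiff A a b) -> G (aiff A (tens A a d) (tens A b d)).
Proof.
  apply (mm_iff_context (valuation3 A a b d) (FTens (Var 0) (Var 2)) (FTens (Var 1) (Var 2))).
  unfold FIff, FImp; solve_repl.
Qed.

Lemma mm_iff_tensr a b d : G (aiff A a b) -> G (aiff A (tens A d a) (tens A d b)).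
Proof.
  apply (mm_iff_context (valuation3 A a b d) (FTens (Var 2) (Var 0)) (FTens (Var 2) (Var 1))).
  unfold FIff, FImp; solve_repl.
Qed.

Lemma mm_iff_circl a b d : G (aiff A a b) -> G (aiff A (circ A a d) (circ A b d)).
Proof.
  apply (mm_iff_context (valuation3 A a b d) (FCirc (Var 0) (Var 2)) (FCirc (Var 1) (Var 2))).
  unfold FIff, FImp; solve_repl.
Qed.

Lemma mm_iff_circr a b d : G (aiff A a b) -> G (aiff A (circ A d a) (circ A d b)).
Proof.
  apply (mm_iff_context (valuation3 A a b d) (FCirc (Var 2) (Var 0)) (FCirc (Var 2) (Var 1))).
  unfold FIff, FImp; solve_repl.
Qed.

Lemma mm_iff_star a b : G (aiff A a b) -> G (aiff A (star A a) (star A b)).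
Proof.
  apply (mm_iff_context (valuation3 A a b b) (FStar (Var 0)) (FStar (Var 1))).
  unfold FIff, FImp; solve_repl.
Qed.

Lemma mm_iff_congruence : congruence A (fun a b => G (aiff A a b)).
Proof.
  repeat split.
  - exact mm_iff_refl.
  - exact mm_iff_sym.
  - exact mm_iff_trans.
  - intros x y x' y' Hx Hy.
    exact (mm_iff_trans _ _ _ (mm_iff_tensl _ _ y Hx) (mm_iff_tensr _ _ x' Hy)).
  - intros x y x' y' Hx Hy.
    exact (mm_iff_trans _ _ _ (mm_iff_circl _ _ y Hx) (mm_iff_circr _ _ x' Hy)).
  - exact mm_iff_star.
Qed.

End MatrixModel.

Section Reduced.
Variable A : algebra.

Lemma reduced_compatible_eq (G : A -> Prop) (th : A -> A -> Prop) :
  reduced A G -> congruence A th -> compatible A th G ->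
  forall a b, th a b -> a = b.
Proof.
  intros [om [[_ [_ Hmax]] Hid]] Hth Hcomp a b Hab.
  apply Hid. exact (Hmax th Hth Hcomp a b Hab).
Qed.

Lemma reduced_mm_iff_eq (G : A -> Prop) : matrix_model A G -> reduced A G ->
  forall a b, G (aiff A a b) -> a = b.
Proof.
  intros HM Hred.
  apply (reduced_compatible_eq G _ Hred (mm_iff_congruence A G HM)).
  exact (mm_iff_compat A G HM).
Qed.

Lemma reduced_of_iff_eq (G : A -> Prop) :
  (forall a, G (aiff A a a)) -> (forall a b, G (aiff A a b) -> a = b) ->
  reduced A G.
Proof.
  intros Hrefl Heq. exists (@eq A). split; [| tauto]. split; [| split].
  - repeat split; intros; subst; auto.
  - now intros a b Ha <-.
  - intros th [Hr [_ [_ [Ht [Hc Hs]]]]] Hcomp a b Hab. apply Heq.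
    apply (Hcomp (aiff A a a)); [apply Hrefl |].
    apply Ht; apply Hs, Hc, Hs; auto.
Qed.

End Reduced.

Section ReducedMatrixModel.
Variable A : algebra.
Variable G : A -> Prop.
Hypothesis HM : matrix_model A G.
Hypothesis Hred : reduced A G.

Let iff_eq := reduced_mm_iff_eq A G HM Hred.

Lemma rmm_circ_comm a b : circ A a b = circ A b a.
Proof.
  apply iff_eq, (mm_adj A G HM);
    exact (mm_axiom A G HM _ (valuation3 A _ _ a) (ax2 (Var 0) (Var 1))).
Qed.

Lemma rmm_tens_comm a b : tens A a b = tens A b a.
Proof. apply iff_eq. exact (mm_axiom A G HM _ (valuation3 A a b b) (ax5 (Var 0) (Var 1))). Qed.

Lemma rmm_imp_star2 a : G (aimp A a (star A (star A a))).
Proof. exact (mm_axiom A G HM _ (valuation3 A a a a) (ax3 (Var 0))). Qed.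

(* (A3) gives [a => a**]; the converse [a** => a] is (A1) for [a**] once
   [a*** = a*], which is (A3) for [a*] together with (A1) read via (A2). *)
Lemma rmm_star_invol a : star A (star A a) = a.
Proof.
  assert (Hstar3 : star A a = star A (star A (star A a))).
  { apply iff_eq, (mm_adj A G HM); [apply rmm_imp_star2 |].
    unfold aimp. rewrite (rmm_circ_comm (star A (star A (star A a)))).
    exact (mm_imp_refl A G HM _). }
  apply iff_eq, (mm_adj A G HM); [| apply rmm_imp_star2].
  pose proof (mm_imp_refl A G HM (star A (star A a))) as H.
  unfold aimp in *. now rewrite <- Hstar3 in H.
Qed.

Lemma rmm_circ_exchange x y z : circ A (tens A x y) z = circ A (tens A x z) y.
Proof.
  pose proof (mm_axiom A G HM _ (valuation3 A x y (star A z)) (ax6 (Var 0) (Var 1) (Var 2))) as H1.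
  pose proof (mm_axiom A G HM _ (valuation3 A x z (star A y)) (ax6 (Var 0) (Var 1) (Var 2))) as H2.
  cbn in H1, H2. rewrite !rmm_star_invol in H1, H2.
  rewrite <- (rmm_star_invol (circ A (tens A x y) z)),
          <- (rmm_star_invol (circ A (tens A x z) y)).
  f_equal. apply iff_eq. unfold aiff, aimp. rewrite !rmm_star_invol.
  now apply (mm_adj A G HM).
Qed.

Lemma rmm_weak_N_algebra : weak_N_algebra A.
Proof.
  repeat split; intros;
    [apply rmm_tens_comm | apply rmm_circ_comm | apply rmm_star_invol
    | apply rmm_circ_exchange].
Qed.

Lemma rmm_Nw_model : Nw_model A (perp_of A G).
Proof.
  split; [exact rmm_weak_N_algebra |].
  repeat split; cbn [perp_of]; intros *; rewrite ?rmm_star_invol.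
  - apply (mm_imp_refl A G HM).
  - intros Hxy Hyx. apply iff_eq. now apply (mm_adj A G HM).
  - unfold aimp. now rewrite rmm_star_invol.
  - unfold aimp. now rewrite rmm_star_invol.
  - trivial.
  - trivial.
  - intros [Hx Hy]. now apply (mm_adj A G HM).
  - apply (mm_simp A G HM x y); assumption.
  - apply (mm_simp A G HM y x). rewrite rmm_tens_comm; assumption.
  - exact (mm_axiom A G HM _ (valuation3 A x y y) (ax4 (Var 0) (Var 1))).
  - apply (mm_mp A G HM).
  - exact (mm_axiom A G HM _ (valuation3 A x y z) (ax7 (Var 0) (Var 1) (Var 2))).
Qed.

End ReducedMatrixModel.

Section NwModel.
Variable A : algebra.
Variable G : A -> Prop.
Hypothesis HN : Nw_model A (perp_of A G).

Lemma Nw_star_invol a : star A (star A a) = a.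
Proof. destruct HN as [[_ [_ [Hinv _]]] _]. apply Hinv. Qed.

Lemma Nw_imp_refl a : G (aimp A a a).
Proof.
  destruct HN as [_ [Ha _]]. pose proof (Ha a) as H. cbn [perp_of] in H.
  now rewrite Nw_star_invol in H.
Qed.

Lemma Nw_tens_iff a b : G a /\ G b <-> G (tens A a b).
Proof. destruct HN as [_ [_ [_ [_ [_ [He _]]]]]]. apply He. Qed.

Lemma Nw_mp a b : G (aimp A a b) -> G a -> G b.
Proof.
  destruct HN as [_ [_ [_ [_ [_ [_ [_ [Hg _]]]]]]]]. intros Hab Ha.
  pose proof (Hg a (star A b)) as H. cbn [perp_of] in H.
  rewrite !Nw_star_invol in H. auto.
Qed.

Lemma Nw_iff_eq a b : G (aiff A a b) -> a = b.
Proof.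
  destruct HN as [_ [_ [Hb _]]]. intro H. apply Nw_tens_iff in H as [Hab Hba].
  apply Hb; cbn [perp_of]; now rewrite Nw_star_invol.
Qed.

Lemma Nw_axiom_valid phi h : NeL_axiom phi -> is_hom A h -> G (h phi).
Proof.
  destruct HN as [[Htc [Hcc [_ Hex]]] [_ [_ [_ [_ [_ [Hf [_ Hh7]]]]]]]].
  intros Ax Hh. pose proof Hh as [Ht [Hc Hs]].
  destruct Ax;
    rewrite ?(hom_imp A h Hh), ?(hom_niff3 A h Hh), ?(hom_iff A h Hh), ?Ht, ?Hc, ?Hs.
  - apply Nw_imp_refl.
  - rewrite (Hcc (h q)). apply Nw_imp_refl.
  - rewrite Nw_star_invol. apply Nw_imp_refl.
  - pose proof (Hf (h p) (h q)) as H. cbn [perp_of] in H.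
    now rewrite Nw_star_invol in H.
  - rewrite (Htc (h q)). apply Nw_tens_iff. split; apply Nw_imp_refl.
  - replace (aimp A (tens A (h p) (star A (h r))) (star A (h q)))
      with (aimp A (tens A (h p) (h q)) (h r))
      by (unfold aimp; rewrite Nw_star_invol; f_equal; apply Hex).
    apply Nw_imp_refl.
  - pose proof (Hh7 (h p) (h q) (h r)) as H. cbn [perp_of] in H.
    now rewrite Nw_star_invol in H.
Qed.

Lemma Nw_matrix_model : matrix_model A G.
Proof.
  intros Gamma phi D h Hh HG. pose proof Hh as [Ht _].
  induction D as [p Hp | p Ax | p q _ IHpq _ IHp | p q _ IHp _ IHq
                 | p q c c' _ IHiff _ IHc R | p q _ IHpq].
  - auto.
  - now apply Nw_axiom_valid.
  - rewrite (hom_imp A h Hh) in IHpq. exact (Nw_mp _ _ IHpq IHp).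
  - rewrite Ht. now apply Nw_tens_iff.
  - rewrite (hom_iff A h Hh) in IHiff.
    now rewrite <- (hom_repl1 A h Hh p q c c' (Nw_iff_eq _ _ IHiff) R).
  - rewrite Ht in IHpq. now apply Nw_tens_iff in IHpq.
Qed.

Lemma Nw_reduced_matrix_model : reduced_matrix_model A G.
Proof.
  split; [exact Nw_matrix_model |].
  apply reduced_of_iff_eq; [| exact Nw_iff_eq].
  intro a. apply Nw_tens_iff. split; apply Nw_imp_refl.
Qed.

End NwModel.

Lemma Nw_perp_of_F (A : algebra) (perp : A -> ext A -> Prop) :
  Nw_model A perp -> forall a u, perp a u <-> perp_of A (F_of A perp) a u.
Proof.
  intros [[_ [_ [Hinv _]]] [_ [_ [Hc [Hd _]]]]] a [b | |];
    cbn [perp_of]; unfold F_of.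
  - unfold aimp. now rewrite Hinv, Hc, Hd.
  - apply Hd.
  - reflexivity.
Qed.

Lemma rel_ext (A : algebra) (R S : A -> ext A -> Prop) :
  (forall a u, R a u <-> S a u) -> R = S.
Proof.
  intro E. apply functional_extensionality; intro a.
  apply functional_extensionality; intro u.
  now apply propositional_extensionality.
Qed.

Theorem proposition4p9 :
  forall A : algebra,
    (* (1) *)
    (forall G : A -> Prop,
        reduced_matrix_model A G <-> Nw_model A (perp_of A G)) /\
    (* (2) *)
    (forall perp : A -> ext A -> Prop,
        Nw_model A perp <->
        (reduced_matrix_model A (F_of A perp) /\
         forall a u, perp a u <-> perp_of A (F_of A perp) a u)) /\
    (* Alg* NeL = algebraic reducts of N_w-models *)
    ((exists G : A -> Prop, reduced_matrix_model A G) <->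
     (exists perp : A -> ext A -> Prop, Nw_model A perp)) /\
    (* G = F_{perp_G} *)
    (forall G : A -> Prop, reduced_matrix_model A G ->
        forall a, G a <-> F_of A (perp_of A G) a) /\
    (* perp = perp_{F_perp} *)
    (forall perp : A -> ext A -> Prop, Nw_model A perp ->
        forall a u, perp a u <-> perp_of A (F_of A perp) a u).
Proof.
  intro A.
  assert (P1 : forall G, reduced_matrix_model A G <-> Nw_model A (perp_of A G)).
  { intro G. split; [intros [HM Hred]; exact (rmm_Nw_model A G HM Hred)
                    | apply Nw_reduced_matrix_model]. }
  assert (P2 : forall perp, Nw_model A perp <->
            (reduced_matrix_model A (F_of A perp) /\
             forall a u, perp a u <-> perp_of A (F_of A perp) a u)).
  { intro perp. split.
    - intro HN. split; [| exact (Nw_perp_of_F A perp HN)].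
      apply P1. now rewrite <- (rel_ext A _ _ (Nw_perp_of_F A perp HN)).
    - intros [Hrmm E]. rewrite (rel_ext A _ _ E). now apply P1. }
  split; [exact P1 |]. split; [exact P2 |]. split; [| split].
  - split; intros [X HX]; [exists (perp_of A X) | exists (F_of A X)];
      [apply P1 | apply P2]; exact HX.
  - reflexivity.
  - exact (Nw_perp_of_F A).
Qed.
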